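(* For every integer $b\geq 1$, $$\sum_{n\geq 1}\frac{H_n}{(2n+1)^{4b-1}}=-2\lambda(4b-1)\ln 2+\Big(2b-\frac12\Big)\lambda(4b)-2\sum_{q=1}^{b-1}\lambda(2q+1)\lambda(4b-2q-1),$$ where an empty sum equals $0$.
   Context: $H_n=1+\frac12+\cdots+\frac1n$ is the $n$-th harmonic number. For real $s>1$, $\lambda(s)=\sum_{n\geq 1}\frac{1}{(2n-1)^s}=(1-2^{-s})\zeta(s)$. *)

From Stdlib Require Import Reals.
From Coquelicot Require Import Coquelicot.
Open Scope R_scope.

Definition harmonic (n : nat) : R :=
  sum_n_m (fun k => / INR k) 1 n.

(* Dirichlet lambda at an integer argument s (> 1):
   lambda(s) = sum_{n >= 1} 1/(2n-1)^s = sum_{m >= 0} 1/(2m+1)^s. *)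
Definition dlambda (s : nat) : R :=
  Series (fun m : nat => / (INR (2 * m + 1)) ^ s).

From Stdlib Require Import Reals Lra Lia Arith.
From Coquelicot Require Import Coquelicot.
Open Scope R_scope.

(* Write x_n = 2n+1, s = 2m+1 (m >= 1) and A(x, y) = 1/(x-y) + 1/(x+y) - 2/x.
   For fixed c, the sum of A(x_a, x_c) over a <> c telescopes into harmonic
   numbers and equals -2 ln 2 - H_c + 3/(2 x_c).  By partial fractions, for a <> c,
     x_a^-s A(x_c, x_a) + x_c^-s A(x_a, x_c) = 2 sum_{q=1}^{m-1} x_a^-(2q+1) x_c^-(s-2q).
   Sum this over all pairs a <> c.  The right-hand side gives twice the pair sum
   sum_q lambda(2q+1) lambda(s-2q), minus its diagonal (m-1) lambda(s+1).  Both terms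
   on the left give the same value sum_c x_c^-s (-2 ln 2 - H_c + 3/(2 x_c)), provided
   the double series x_a^-s A(x_c, x_a) may be summed in either order; this holds since
   its positive part (a < c) has column sums O(x_c^-2).  Solving for sum_c H_c x_c^-s
   gives the formula for every odd exponent s >= 3; for s = 4b-1 the pair sum is
   symmetric under q -> m-q and folds onto q <= b-1. *)

(** * Series of reals *)

Lemma is_series_lim_seq (a : nat -> R) (l : R) :
  is_lim_seq (sum_n a) l -> is_series a l.
Proof. easy. Qed.

(* Coquelicot's lemmas stated over [R], so that the equations they produce are
   equations in [R], on which [ring] and [field] work. *)

Lemma is_series_Rplus (a b : nat -> R) (la lb : R) :
  is_series a la -> is_series b lb -> is_series (fun n => a n + b n) (la + lb).
Proof. exact (is_series_plus a b la lb). Qed.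

Lemma is_series_Rminus (a b : nat -> R) (la lb : R) :
  is_series a la -> is_series b lb -> is_series (fun n => a n - b n) (la - lb).
Proof. exact (is_series_minus a b la lb). Qed.

Lemma is_series_Rmult_l (x : R) (a : nat -> R) (l : R) :
  is_series a l -> is_series (fun n => x * a n) (x * l).
Proof. exact (is_series_scal x a l). Qed.

Lemma is_series_Rext (a b : nat -> R) (l : R) :
  (forall n, a n = b n) -> is_series a l -> is_series b l.
Proof. apply is_series_ext. Qed.

Lemma sum_n_m_Rext (a b : nat -> R) (n m : nat) :
  (forall k, (n <= k <= m)%nat -> a k = b k) -> sum_n_m a n m = sum_n_m b n m.
Proof. apply sum_n_m_ext_loc. Qed.

Lemma sum_n_m_Rmult_l (x : R) (a : nat -> R) (n m : nat) :
  sum_n_m (fun k => x * a k) n m = x * sum_n_m a n m.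
Proof. exact (sum_n_m_mult_l x a n m). Qed.

Lemma sum_n_S (a : nat -> R) (n : nat) : sum_n a (S n) = sum_n a n + a (S n).
Proof. exact (sum_Sn a n). Qed.

Lemma is_series_finite_support (a : nat -> R) (N : nat) :
  (forall n, (N < n)%nat -> a n = 0) -> is_series a (sum_n a N).
Proof.
  intros Ha. apply is_series_lim_seq, (is_lim_seq_incr_n _ N).
  apply is_lim_seq_ext with (fun _ => sum_n a N); [|apply is_lim_seq_const].
  induction n as [|n IH]; [easy|].
  replace (S n + N)%nat with (S (n + N)) by lia.
  rewrite sum_n_S, Ha by lia. lra.
Qed.

Lemma is_series_indicator (c : nat) (v : R) :
  is_series (fun a => if a =? c then v else 0) v.
Proof.
  set (f := fun a => if a =? c then v else 0).
  assert (Hv : sum_n f c = v).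
  { destruct c as [|c]; [apply sum_O|].
    rewrite sum_n_S. unfold f at 2. rewrite Nat.eqb_refl.
    unfold sum_n. rewrite (sum_n_m_ext_loc _ (fun _ => zero)), sum_n_m_const_zero.
    - apply Rplus_0_l.
    - intros k Hk. unfold f. destruct (Nat.eqb_spec k (S c)); [lia | easy]. }
  enough (H : is_series f (sum_n f c)) by now rewrite Hv in H.
  apply is_series_finite_support. intros n Hn.
  unfold f. destruct (Nat.eqb_spec n c); [lia | easy].
Qed.

Lemma is_series_0 : is_series (fun _ : nat => 0) 0.
Proof.
  enough (H : is_series (fun _ : nat => 0) (sum_n (fun _ => 0) 0)) by now rewrite sum_O in H.
  now apply is_series_finite_support.
Qed.

Lemma is_series_sum_n_m (f : nat -> nat -> R) (l : nat -> R) (n m : nat) :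
  (forall k, (n <= k <= m)%nat -> is_series (f k) (l k)) ->
  is_series (fun i => sum_n_m (fun k => f k i) n m) (sum_n_m l n m).
Proof.
  induction m as [|m IH]; intros Hf.
  - destruct n as [|n].
    + rewrite sum_n_n. apply (is_series_Rext (f 0%nat)); [|apply Hf; lia].
      intro i. now rewrite sum_n_n.
    + rewrite sum_n_m_zero by lia.
      apply (is_series_Rext (fun _ => 0)); [intro i; now rewrite sum_n_m_zero by lia|].
      exact is_series_0.
  - destruct (le_lt_dec n (S m)) as [Hn|Hn].
    + rewrite sum_n_Sm by exact Hn.
      apply (is_series_Rext (fun i => sum_n_m (fun k => f k i) n m + f (S m) i)).
      { intro i. now rewrite sum_n_Sm. }
      apply (is_series_Rplus _ (f (S m))); [apply IH|apply Hf]; intros; try apply Hf; lia.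
    + rewrite sum_n_m_zero by lia.
      apply (is_series_Rext (fun _ => 0)); [intro i; now rewrite sum_n_m_zero by lia|].
      exact is_series_0.
Qed.

Lemma is_series_le (a b : nat -> R) (la lb : R) :
  (forall n, a n <= b n) -> is_series a la -> is_series b lb -> la <= lb.
Proof.
  intros Hab Ha Hb.
  apply (is_lim_seq_le (sum_n a) (sum_n b) la lb); [|exact Ha|exact Hb].
  intro N. now apply sum_n_m_le.
Qed.

Lemma sum_n_le_is_series (a : nat -> R) (l : R) (N : nat) :
  (forall n, 0 <= a n) -> is_series a l -> sum_n a N <= l.
Proof.
  intros Ha Hl. apply (is_lim_seq_incr_compare (sum_n a)); [exact Hl|].
  intro n. rewrite sum_n_S. specialize (Ha (S n)). lra.
Qed.

Lemma term_le_is_series (a : nat -> R) (l : R) (k : nat) :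
  (forall n, 0 <= a n) -> is_series a l -> a k <= l.
Proof.
  intros Ha Hl.
  apply (is_series_le (fun n => if n =? k then a k else 0) a);
    [|apply is_series_indicator|exact Hl].
  intro n. destruct (Nat.eqb_spec n k); [subst; lra | apply Ha].
Qed.

Lemma is_series_le_bound (a : nat -> R) (l M : R) :
  is_series a l -> (forall N, sum_n a N <= M) -> l <= M.
Proof.
  intros Hl HM.
  apply (is_lim_seq_le (sum_n a) (fun _ => M) l M HM Hl (is_lim_seq_const M)).
Qed.

Lemma ex_series_bounded (a : nat -> R) (M : R) :
  (forall n, 0 <= a n) -> (forall N, sum_n a N <= M) -> ex_series a.
Proof.
  intros Ha HM. destruct (ex_finite_lim_seq_incr (sum_n a) M) as [l Hl].
  - intro n. rewrite sum_n_S. specialize (Ha (S n)). lra.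
  - exact HM.
  - now exists l.
Qed.

Lemma tonelli_partial_le (g : nat -> nat -> R) (c r : nat -> R) (L : R) :
  (forall i j, 0 <= g i j) ->
  (forall j, is_series (fun i => g i j) (c j)) ->
  (forall i, is_series (g i) (r i)) -> is_series r L ->
  forall N, sum_n c N <= L.
Proof.
  intros Hg Hc Hr HL N.
  apply (is_series_le (fun i => sum_n (fun j => g i j) N) r);
    [|now apply is_series_sum_n_m|exact HL].
  intro i. now apply sum_n_le_is_series.
Qed.

Lemma is_series_tonelli (g : nat -> nat -> R) (c : nat -> R) (L : R) :
  (forall i j, 0 <= g i j) ->
  (forall j, is_series (fun i => g i j) (c j)) -> is_series c L ->
  (forall i, ex_series (g i)) /\ is_series (fun i => Series (g i)) L.
Proof.
  intros Hg Hc HL.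
  assert (Hrow : forall i, ex_series (g i)).
  { intro i. apply (@ex_series_le R_AbsRing R_CompleteNormedModule _ c); [|now exists L].
    intro j. change (norm (g i j)) with (Rabs (g i j)). rewrite Rabs_pos_eq by apply Hg.
    now apply (term_le_is_series (fun i => g i j)). }
  set (r := fun i => Series (g i)).
  assert (Hr : forall i, is_series (g i) (r i)) by (intro i; now apply Series_correct).
  assert (Hr_nonneg : forall i, 0 <= r i).
  { intro i. apply (Rle_trans _ (g i 0%nat)); [apply Hg|]. now apply term_le_is_series. }
  assert (Hr_le : forall N, sum_n r N <= L)
    by exact (tonelli_partial_le (fun j i => g i j) r c L (fun j i => Hg i j) Hr Hc HL).
  destruct (ex_series_bounded r L Hr_nonneg Hr_le) as [L' HL'].
  split; [exact Hrow|].
  replace L with L'; [exact HL'|].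
  apply Rle_antisym.
  - now apply (is_series_le_bound r).
  - apply (is_series_le_bound c); [exact HL|].
    exact (tonelli_partial_le g c r L' Hg Hc Hr HL').
Qed.

Lemma is_series_swap_dominated (g h : nat -> nat -> R) (ch c r : nat -> R) (L : R) :
  (forall i j, 0 <= h i j) -> (forall i j, g i j <= h i j) ->
  (forall j, is_series (fun i => h i j) (ch j)) -> ex_series ch ->
  (forall j, is_series (fun i => g i j) (c j)) -> is_series c L ->
  (forall i, is_series (g i) (r i)) -> is_series r L.
Proof.
  intros Hh Hgh Hch [Lh HLh] Hc HL Hr.
  destruct (is_series_tonelli h ch Lh Hh Hch HLh) as [Hh_row Hh_sum].
  destruct (is_series_tonelli (fun i j => h i j - g i j) (fun j => ch j - c j) (Lh - L))
    as [Hhg_row Hhg_sum].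
  - intros i j. specialize (Hgh i j). lra.
  - intro j. now apply (is_series_Rminus (fun i => h i j)).
  - now apply is_series_Rminus.
  - apply (is_series_Rext (fun i => Series (h i) - Series (fun j => h i j - g i j))).
    + intro i. rewrite <- (is_series_unique _ _ (Hr i)). symmetry. apply is_series_unique.
      apply (is_series_Rext (fun j => h i j - (h i j - g i j))).
      { intro j. ring. }
      apply is_series_Rminus; now apply Series_correct.
    + replace L with (Lh - (Lh - L)) by ring. now apply is_series_Rminus.
Qed.

(** * Harmonic numbers *)

Lemma harmonic_0 : harmonic 0 = 0.
Proof. unfold harmonic. now rewrite sum_n_m_zero by lia. Qed.

Lemma harmonic_S (n : nat) : harmonic (S n) = harmonic n + / INR (S n).
Proof. unfold harmonic. now rewrite sum_n_Sm by lia. Qed.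

Lemma harmonic_shift_bounds (n d : nat) :
  0 <= harmonic (n + d) - harmonic n <= INR d / (INR n + 1).
Proof.
  induction d as [|d IH].
  - rewrite Nat.add_0_r. unfold Rdiv. simpl. lra.
  - replace (n + S d)%nat with (S (n + d)) by lia.
    rewrite harmonic_S, S_INR, S_INR, plus_INR.
    pose proof (pos_INR n). pose proof (pos_INR d).
    assert (0 < / (INR n + INR d + 1)) by (apply Rinv_0_lt_compat; lra).
    assert (/ (INR n + INR d + 1) <= / (INR n + 1)) by (apply Rinv_le_contravar; lra).
    replace ((INR d + 1) / (INR n + 1)) with (INR d / (INR n + 1) + / (INR n + 1)) by (field; lra).
    lra.
Qed.

Lemma harmonic_nonneg (n : nat) : 0 <= harmonic n.
Proof. pose proof (harmonic_shift_bounds 0 n). rewrite harmonic_0 in H. simpl in H. lra. Qed.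

Lemma harmonic_le (n : nat) : harmonic n <= INR n.
Proof.
  pose proof (harmonic_shift_bounds 0 n) as H. rewrite harmonic_0 in H. simpl in H. lra.
Qed.

Lemma ln_le_sub_1 (y : R) : 0 < y -> ln y <= y - 1.
Proof.
  intros Hy. rewrite <- (ln_exp (y - 1)). apply ln_le; [exact Hy|].
  pose proof (exp_ineq1_le (y - 1)). lra.
Qed.

Lemma ln_succ_bounds (t : R) : 1 <= t -> / (t + 1) <= ln (t + 1) - ln t <= / t.
Proof.
  intros Ht. split.
  - pose proof (ln_le_sub_1 (t / (t + 1))) as H.
    rewrite ln_div in H by lra.
    replace (t / (t + 1) - 1) with (- / (t + 1)) in H by (field; lra).
    assert (0 < t / (t + 1)) by (apply Rdiv_lt_0_compat; lra). lra.
  - pose proof (ln_le_sub_1 ((t + 1) / t)) as H.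
    rewrite ln_div in H by lra.
    replace ((t + 1) / t - 1) with (/ t) in H by (field; lra).
    assert (0 < (t + 1) / t) by (apply Rdiv_lt_0_compat; lra). lra.
Qed.

Lemma harmonic_ln_bounds (n d : nat) : (1 <= n)%nat ->
  ln (INR (n + d) + 1) - ln (INR n + 1) <= harmonic (n + d) - harmonic n
  <= ln (INR (n + d)) - ln (INR n).
Proof.
  intros Hn. induction d as [|d IH].
  - rewrite Nat.add_0_r. lra.
  - replace (n + S d)%nat with (S (n + d)) by lia.
    rewrite harmonic_S, S_INR.
    assert (1 <= INR (n + d)) by (apply (le_INR 1); lia).
    pose proof (ln_succ_bounds (INR (n + d) + 1)).
    pose proof (ln_succ_bounds (INR (n + d))).
    lra.
Qed.

Lemma is_lim_seq_inv_succ : is_lim_seq (fun k => / (INR k + 1)) 0.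
Proof.
  apply (is_lim_seq_ext (fun k => / INR (S k))); [intro k; now rewrite S_INR|].
  replace (Finite 0) with (Rbar_inv p_infty) by reflexivity.
  apply is_lim_seq_inv; [|discriminate].
  apply (is_lim_seq_incr_1 INR), is_lim_seq_INR.
Qed.

Lemma harmonic_shift_lim (d : nat) :
  is_lim_seq (fun k => harmonic (k + d) - harmonic k) 0.
Proof.
  apply is_lim_seq_le_le with (fun _ => 0) (fun k => INR d * / (INR k + 1)).
  - intro k. apply harmonic_shift_bounds.
  - apply is_lim_seq_const.
  - replace (Finite 0) with (Rbar_mult (INR d) 0) by (simpl; f_equal; ring).
    apply is_lim_seq_scal_l, is_lim_seq_inv_succ.
Qed.

Lemma harmonic_double_lim : is_lim_seq (fun k => harmonic (2 * k) - harmonic k) (ln 2).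
Proof.
  apply (is_lim_seq_incr_1 _).
  apply is_lim_seq_le_le with (fun k => ln 2 - / (INR k + 1)) (fun _ => ln 2).
  - intro k. set (n := S k).
    assert (Hn : 1 <= INR n) by (apply (le_INR 1); unfold n; lia).
    assert (Hk : INR k + 1 = INR n) by (symmetry; apply S_INR).
    replace (2 * n)%nat with (n + n)%nat by lia.
    pose proof (harmonic_ln_bounds n n ltac:(unfold n; lia)) as H.
    rewrite plus_INR in H. replace (INR n + INR n) with (2 * INR n) in H by ring.
    rewrite ln_mult in H by lra.
    assert (ln (2 * INR n) <= ln (2 * INR n + 1)) by (apply ln_le; lra).
    rewrite ln_mult in * by lra.
    pose proof (ln_succ_bounds (INR n) Hn). rewrite Hk. lra.
  - replace (Finite (ln 2)) with (Finite (ln 2 - 0)) by (f_equal; ring).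
    apply is_lim_seq_minus'; [apply is_lim_seq_const|apply is_lim_seq_inv_succ].
  - apply is_lim_seq_const.
Qed.

(** * Odd numbers and the kernel *)

Definition oddR (n : nat) : R := INR (2 * n + 1).

Lemma oddR_eq (n : nat) : oddR n = 2 * INR n + 1.
Proof. unfold oddR. rewrite plus_INR, mult_INR. simpl. ring. Qed.

Lemma oddR_ge_1 (n : nat) : 1 <= oddR n.
Proof. rewrite oddR_eq. pose proof (pos_INR n). lra. Qed.

Lemma oddR_pos (n : nat) : 0 < oddR n.
Proof. pose proof (oddR_ge_1 n). lra. Qed.

Lemma oddR_add_2_le (a c : nat) : (a < c)%nat -> oddR a + 2 <= oddR c.
Proof.
  intros Hac. rewrite !oddR_eq.
  assert (INR (S a) <= INR c) by (apply le_INR; lia). rewrite S_INR in H. lra.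
Qed.

Lemma inv_pow_le (x : R) (k k' : nat) : 1 <= x -> (k <= k')%nat -> / x ^ k' <= / x ^ k.
Proof.
  intros Hx Hk. apply Rinv_le_contravar; [apply pow_lt; lra|]. now apply Rle_pow.
Qed.

Lemma ex_series_inv_oddR_pow (k : nat) : (2 <= k)%nat -> ex_series (fun m => / oddR m ^ k).
Proof.
  intros Hk.
  (* [1/(2m+1)^2 <= 2 (1/(m+1) - 1/(m+2))], whose partial sums telescope to at most 2 *)
  apply ex_series_bounded with 2.
  - intro n. left. apply Rinv_0_lt_compat, pow_lt, oddR_pos.
  - intro N. apply Rle_trans with (sum_n (fun m => 2 * (/ (INR m + 1) - / (INR m + 2))) N).
    + apply sum_n_m_le. intro m. apply Rle_trans with (/ oddR m ^ 2).
      { apply inv_pow_le; [apply oddR_ge_1|exact Hk]. }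
      rewrite oddR_eq. pose proof (pos_INR m).
      replace (2 * (/ (INR m + 1) - / (INR m + 2))) with (/ ((INR m + 1) * (INR m + 2) / 2))
        by (field; lra).
      apply Rinv_le_contravar; simpl; nra.
    + assert (Htel : forall M, @eq R (sum_n (fun m => 2 * (/ (INR m + 1) - / (INR m + 2))) M)
                                      (2 * (1 - / (INR M + 2)))).
      { induction M as [|M IH]; [rewrite sum_O; simpl; field|].
        rewrite sum_n_S, IH, S_INR. pose proof (pos_INR M). field. lra. }
      rewrite Htel. pose proof (pos_INR N).
      assert (0 < / (INR N + 2)) by (apply Rinv_0_lt_compat; lra). lra.
Qed.

Lemma is_series_dlambda (k : nat) :
  (2 <= k)%nat -> is_series (fun m => / oddR m ^ k) (dlambda k).
Proof. intros Hk. exact (Series_correct _ (ex_series_inv_oddR_pow k Hk)). Qed.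

Lemma sum_n_inv_oddR (N : nat) :
  @eq R (sum_n (fun a => / oddR a) N) (harmonic (2 * N + 2) - / 2 * harmonic (N + 1)).
Proof.
  induction N as [|N IH].
  - rewrite sum_O. simpl. rewrite !harmonic_S, harmonic_0. unfold oddR. simpl. field.
  - rewrite sum_n_S, IH.
    replace (2 * S N + 2)%nat with (S (S (2 * N + 2))) by lia.
    replace (S N + 1)%nat with (S (N + 1)) by lia.
    rewrite !harmonic_S, oddR_eq, !S_INR, !plus_INR, mult_INR, S_INR.
    pose proof (pos_INR N). simpl. field. lra.
Qed.

Lemma sum_n_inv_oddR_add (c N : nat) :
  @eq R (sum_n (fun a => / (oddR a + oddR c)) N) (/ 2 * (harmonic (N + c + 1) - harmonic c)).
Proof.
  induction N as [|N IH].
  - rewrite sum_O. replace (0 + c + 1)%nat with (S c) by lia.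
    rewrite harmonic_S, !oddR_eq, S_INR. simpl.
    pose proof (pos_INR c). field. lra.
  - rewrite sum_n_S, IH. replace (S N + c + 1)%nat with (S (N + c + 1)) by lia.
    rewrite harmonic_S, !oddR_eq, !S_INR, !plus_INR, S_INR.
    pose proof (pos_INR N). pose proof (pos_INR c). simpl. field. lra.
Qed.

Lemma sum_n_inv_oddR_sub (c N : nat) :
  @eq R (sum_n (fun a => if a =? c then 0 else / (oddR a - oddR c)) N)
        (/ 2 * (harmonic (N - c) + harmonic (c - N - 1) - harmonic c)).
Proof.
  assert (Hgap : forall a, oddR a - oddR c = 2 * (INR a - INR c)).
  { intro a. rewrite !oddR_eq. ring. }
  induction N as [|N IH].
  - rewrite sum_O. destruct c as [|c]; [simpl; rewrite harmonic_0; field|].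
    simpl (0 =? S c). rewrite Hgap.
    replace (0 - S c)%nat with 0%nat by lia. replace (S c - 0 - 1)%nat with c by lia.
    rewrite harmonic_S, harmonic_0, S_INR. simpl. pose proof (pos_INR c). field. lra.
  - rewrite sum_n_S, IH. destruct (lt_eq_lt_dec (S N) c) as [[Hlt|Heq]|Hgt].
    + replace (S N =? c) with false by (symmetry; apply Nat.eqb_neq; lia).
      replace (S N - c)%nat with 0%nat by lia. replace (N - c)%nat with 0%nat by lia.
      replace (c - N - 1)%nat with (S (c - S N - 1)) by lia.
      rewrite harmonic_S, Hgap.
      replace (INR (S (c - S N - 1))) with (INR c - INR (S N))
        by (rewrite <- minus_INR by lia; f_equal; lia).
      assert (INR (S N) < INR c) by (apply lt_INR; exact Hlt). field. lra.
    + subst c. rewrite Nat.eqb_refl, Nat.sub_diag.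
      replace (N - S N)%nat with 0%nat by lia. replace (S N - N - 1)%nat with 0%nat by lia.
      simpl (0 - 1)%nat. ring.
    + replace (S N =? c) with false by (symmetry; apply Nat.eqb_neq; lia).
      replace (S N - c)%nat with (S (N - c)) by lia.
      replace (c - N - 1)%nat with 0%nat by lia. replace (c - S N - 1)%nat with 0%nat by lia.
      rewrite harmonic_S, Hgap.
      replace (INR (S (N - c))) with (INR (S N) - INR c)
        by (rewrite <- minus_INR by lia; f_equal; lia).
      assert (INR c < INR (S N)) by (apply lt_INR; exact Hgt). field. lra.
Qed.

Definition kern (x y : R) : R := / (x - y) + / (x + y) - 2 / x.

Definition kern_odd (c a : nat) : R := if a =? c then 0 else kern (oddR a) (oddR c).

Lemma is_lim_seq_Rmult_l (x : R) (u : nat -> R) (l : R) :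
  is_lim_seq u l -> is_lim_seq (fun n => x * u n) (x * l).
Proof. intros Hu. exact (is_lim_seq_mult' _ _ x l (is_lim_seq_const x) Hu). Qed.

Lemma is_series_kern_odd_core (c : nat) :
  is_series (fun a => (if a =? c then 0 else / (oddR a - oddR c))
                      + / (oddR a + oddR c) - 2 * / oddR a)
    (-2 * ln 2 - harmonic c).
Proof.
  apply is_series_lim_seq, (is_lim_seq_incr_n _ c).
  apply (is_lim_seq_ext (fun k =>
           -2 * (harmonic (2 * (k + S c)) - harmonic (k + S c))
           - / 2 * (harmonic (k + S c) - harmonic k)
           + / 2 * (harmonic (k + S c + c) - harmonic (k + S c)) - harmonic c)).
  - intro k.
    assert (Hlin : forall (f g h : nat -> R) N,
               @eq R (sum_n (fun a => f a + g a - 2 * h a) N)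
                     (sum_n f N + sum_n g N - 2 * sum_n h N)).
    { intros f g h N. induction N as [|N IH]; [now rewrite !sum_O|].
      rewrite !sum_n_S, IH. lra. }
    rewrite Hlin, sum_n_inv_oddR_sub, sum_n_inv_oddR_add, sum_n_inv_oddR.
    replace (k + c - c)%nat with k by lia. replace (c - (k + c) - 1)%nat with 0%nat by lia.
    replace (k + c + c + 1)%nat with (k + S c + c)%nat by lia.
    replace (2 * (k + c) + 2)%nat with (2 * (k + S c))%nat by lia.
    replace (k + c + 1)%nat with (k + S c)%nat by lia.
    rewrite harmonic_0. lra.
  - replace (-2 * ln 2 - harmonic c) with (-2 * ln 2 - / 2 * 0 + / 2 * 0 - harmonic c) by ring.
    apply is_lim_seq_minus'; [|apply is_lim_seq_const].
    apply is_lim_seq_plus'; [apply is_lim_seq_minus'|]; apply is_lim_seq_Rmult_l.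
    + exact (proj1 (is_lim_seq_incr_n _ (S c) _) harmonic_double_lim).
    + apply harmonic_shift_lim.
    + exact (proj1 (is_lim_seq_incr_n _ (S c) _) (harmonic_shift_lim c)).
Qed.

Lemma is_series_kern_odd (c : nat) :
  is_series (kern_odd c) (-2 * ln 2 - harmonic c + 3 / (2 * oddR c)).
Proof.
  apply (is_series_Rext (fun a => ((if a =? c then 0 else / (oddR a - oddR c))
                                  + / (oddR a + oddR c) - 2 * / oddR a)
                                 + (if a =? c then 3 / (2 * oddR c) else 0))).
  - intro a. unfold kern_odd, kern. destruct (Nat.eqb_spec a c) as [->|_]; [|unfold Rdiv; ring].
    pose proof (oddR_pos c). field. lra.
  - apply is_series_Rplus; [apply is_series_kern_odd_core|apply is_series_indicator].
Qed.

(** * Partial fractions and signs of the kernel *)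

Lemma kern_step (x y : R) : 0 < x -> 0 < y -> x <> y ->
  / y ^ 2 * kern y x + 2 / y ^ 3 = / x ^ 2 * kern y x.
Proof. intros. unfold kern. simpl. field. repeat split; lra. Qed.

Lemma kern_pow_sum (x y : R) (m : nat) : 0 < x -> 0 < y -> x <> y -> (1 <= m)%nat ->
  2 * sum_n_m (fun q => / x ^ (2 * q + 1) * / y ^ (2 * m + 1 - 2 * q)) 1 (m - 1)
  = / y ^ (2 * m + 1) * kern x y + / x ^ (2 * m + 1) * kern y x.
Proof.
  intros Hx Hy Hxy Hm. induction m as [|m IH]; [lia|].
  destruct m as [|m].
  - rewrite sum_n_m_zero by lia. change zero with 0. unfold kern. simpl. field. repeat split; lra.
  - specialize (IH ltac:(lia)). replace (S (S m) - 1)%nat with (S m) by lia.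
    replace (S m - 1)%nat with m in IH by lia.
    rewrite sum_n_Sm by lia.
    assert (Hpull :
      sum_n_m (fun q => / x ^ (2 * q + 1) * / y ^ (2 * S (S m) + 1 - 2 * q)) 1 m
      = / y ^ 2 * sum_n_m (fun q => / x ^ (2 * q + 1) * / y ^ (2 * S m + 1 - 2 * q)) 1 m).
    { rewrite <- sum_n_m_Rmult_l. apply sum_n_m_Rext. intros q Hq.
      replace (2 * S (S m) + 1 - 2 * q)%nat with (2 + (2 * S m + 1 - 2 * q))%nat by lia.
      rewrite (pow_add y 2), Rinv_mult.
      set (u := / x ^ (2 * q + 1)). set (v := / y ^ (2 * S m + 1 - 2 * q)). ring. }
    change (plus ?a ?b) with (a + b). rewrite Hpull.
    replace (2 * S (S m) + 1 - 2 * S m)%nat with 3%nat by lia.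
    replace (2 * S (S m) + 1)%nat with (2 + (2 * S m + 1))%nat by lia.
    rewrite (pow_add x 2), (pow_add y 2), !Rinv_mult.
    set (T := sum_n_m _ 1 m) in *.
    set (P := / x ^ (2 * S m + 1)) in *. set (Q := / y ^ (2 * S m + 1)) in *.
    pose proof (kern_step x y Hx Hy Hxy) as Hstep.
    transitivity (/ y ^ 2 * (2 * T) + P * (2 / y ^ 3)); [unfold Rdiv; ring|].
    rewrite IH.
    transitivity (/ y ^ 2 * Q * kern x y + P * (/ x ^ 2 * kern y x)); [rewrite <- Hstep|]; ring.
Qed.

Lemma kern_nonneg (x y : R) : 0 < x -> x < y -> 0 <= kern y x.
Proof.
  intros Hx Hxy. unfold kern.
  replace (/ (y - x) + / (y + x) - 2 / y) with (2 * x * x / (y * (y - x) * (y + x)))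
    by (field; repeat split; lra).
  apply Rlt_le, Rdiv_lt_0_compat; [nra|]. apply Rmult_lt_0_compat; [nra|lra].
Qed.

Lemma kern_nonpos (x y : R) : 0 < y -> y < x -> kern y x <= 0.
Proof.
  intros Hy Hyx. unfold kern.
  assert (/ (y - x) < 0) by (apply Rinv_lt_0_compat; lra).
  assert (/ (y + x) <= / y) by (apply Rinv_le_contravar; lra).
  assert (0 < / y) by (apply Rinv_0_lt_compat; lra).
  unfold Rdiv. lra.
Qed.

Lemma inv_pow_mul_kern_le (x y : R) (s : nat) : 1 <= x -> x + 2 <= y -> (3 <= s)%nat ->
  / x ^ s * kern y x <= 4 / y ^ 3.
Proof.
  intros Hx Hy Hs.
  apply Rle_trans with (/ x ^ 3 * kern y x).
  { apply Rmult_le_compat_r; [apply kern_nonneg; lra|]. now apply inv_pow_le. }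
  unfold kern.
  replace (/ x ^ 3 * (/ (y - x) + / (y + x) - 2 / y)) with (/ (x * y * (y - x) * (y + x) / 2))
    by (simpl; field; repeat split; lra).
  replace (4 / y ^ 3) with (/ (y ^ 3 / 4)) by (simpl; field; lra).
  assert (Hyy : y * y <= 2 * x * (y - x) * (y + x)).
  { assert (y <= 2 * x * (y - x)) by nra. nra. }
  apply Rinv_le_contravar; simpl; nra.
Qed.

Lemma kern_odd_nonneg (a c : nat) : (a < c)%nat -> 0 <= kern_odd a c.
Proof.
  intros Hac. unfold kern_odd. destruct (Nat.eqb_spec c a); [lra|].
  apply kern_nonneg; [apply oddR_pos|]. pose proof (oddR_add_2_le a c Hac). lra.
Qed.

Lemma kern_odd_nonpos (a c : nat) : (c <= a)%nat -> kern_odd a c <= 0.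
Proof.
  intros Hca. unfold kern_odd. destruct (Nat.eqb_spec c a); [lra|].
  apply kern_nonpos; [apply oddR_pos|]. pose proof (oddR_add_2_le c a ltac:(lia)). lra.
Qed.

Lemma sum_n_m_symmetric (F : nat -> R) (n : nat) :
  (forall q, (1 <= q <= 2 * n)%nat -> F (2 * n + 1 - q)%nat = F q) ->
  @eq R (sum_n_m F 1 (2 * n)) (2 * sum_n_m F 1 n).
Proof.
  revert F. induction n as [|n IH]; intros F HF.
  - rewrite !sum_n_m_zero by lia. change zero with 0. ring.
  - replace (2 * S n)%nat with (S (S (2 * n))) by lia.
    rewrite sum_Sn_m, sum_n_Sm, <- sum_n_m_S, (sum_Sn_m F 1 (S n)), <- (sum_n_m_S F 1 n) by lia.
    rewrite (IH (fun q => F (S q))).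
    + replace (F (S (S (2 * n)))) with (F 1%nat) by (rewrite <- (HF 1%nat) by lia; f_equal; lia).
      repeat change (plus ?a ?b) with (a + b). ring.
    + intros q Hq. rewrite <- (HF (S q)) by lia. f_equal. lia.
Qed.

(** * The double series *)

Definition kern_odd_total (c : nat) : R := -2 * ln 2 - harmonic c + 3 / (2 * oddR c).

Definition weighted_kern (m a c : nat) : R := / oddR a ^ (2 * m + 1) * kern_odd a c.

Definition weighted_kern_pos (m a c : nat) : R := if a <? c then weighted_kern m a c else 0.

Definition mixed_term (m a c : nat) : R :=
  sum_n_m (fun q => / oddR a ^ (2 * q + 1) * / oddR c ^ (2 * m + 1 - 2 * q)) 1 (m - 1).

Definition lambda_pair_sum (m : nat) : R :=
  sum_n_m (fun q => dlambda (2 * q + 1) * dlambda (2 * m + 1 - 2 * q)) 1 (m - 1).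

Section OddExponent.

Variable m : nat.
Hypothesis hm : (1 <= m)%nat.

Lemma weighted_kern_decomp (a c : nat) :
  weighted_kern m a c = 2 * mixed_term m a c - / oddR c ^ (2 * m + 1) * kern_odd c a
                        - (if a =? c then 2 * mixed_term m c c else 0).
Proof.
  unfold weighted_kern, kern_odd.
  destruct (Nat.eqb_spec a c) as [->|Hac]; [rewrite Nat.eqb_refl; ring|].
  destruct (Nat.eqb_spec c a) as [->|_]; [congruence|].
  assert (Hne : oddR a <> oddR c).
  { rewrite !oddR_eq. intro E. apply Hac, INR_eq. lra. }
  unfold mixed_term. rewrite (kern_pow_sum _ _ m (oddR_pos a) (oddR_pos c) Hne hm). ring.
Qed.

Lemma mixed_term_diag (c : nat) : mixed_term m c c = INR (m - 1) * / oddR c ^ (2 * m + 2).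
Proof.
  unfold mixed_term. rewrite (sum_n_m_Rext _ (fun _ => / oddR c ^ (2 * m + 2))).
  - rewrite sum_n_m_const. do 2 f_equal. lia.
  - intros q Hq. rewrite <- Rinv_mult, <- pow_add. do 2 f_equal. lia.
Qed.

Lemma is_series_mixed_term (c : nat) :
  is_series (fun a => mixed_term m a c)
    (sum_n_m (fun q => dlambda (2 * q + 1) * / oddR c ^ (2 * m + 1 - 2 * q)) 1 (m - 1)).
Proof.
  apply (is_series_sum_n_m (fun q a => / oddR a ^ (2 * q + 1) * / oddR c ^ (2 * m + 1 - 2 * q))).
  intros q Hq. apply is_series_scal_r, is_series_dlambda. lia.
Qed.

Lemma is_series_mixed_term_total :
  is_series
    (fun c => sum_n_m (fun q => dlambda (2 * q + 1) * / oddR c ^ (2 * m + 1 - 2 * q)) 1 (m - 1))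
    (lambda_pair_sum m).
Proof.
  apply (is_series_sum_n_m (fun q c => dlambda (2 * q + 1) * / oddR c ^ (2 * m + 1 - 2 * q))).
  intros q Hq. apply is_series_Rmult_l, is_series_dlambda. lia.
Qed.

Lemma weighted_kern_pos_nonneg (a c : nat) : 0 <= weighted_kern_pos m a c.
Proof.
  unfold weighted_kern_pos, weighted_kern. destruct (Nat.ltb_spec a c) as [Hac|_]; [|lra].
  apply Rmult_le_pos; [left; apply Rinv_0_lt_compat, pow_lt, oddR_pos|].
  now apply kern_odd_nonneg.
Qed.

Lemma weighted_kern_le_pos (a c : nat) : weighted_kern m a c <= weighted_kern_pos m a c.
Proof.
  unfold weighted_kern_pos, weighted_kern. destruct (Nat.ltb_spec a c) as [_|Hca]; [lra|].
  assert (0 < / oddR a ^ (2 * m + 1)) by apply Rinv_0_lt_compat, pow_lt, oddR_pos.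
  pose proof (kern_odd_nonpos a c Hca). nra.
Qed.

Lemma is_series_weighted_kern_pos (c : nat) :
  is_series (fun a => weighted_kern_pos m a c) (sum_n (fun a => weighted_kern_pos m a c) c).
Proof.
  apply is_series_finite_support. intros a Ha.
  unfold weighted_kern_pos. destruct (Nat.ltb_spec a c); [lia|easy].
Qed.

(* Each of the [c + 1] terms is at most [4 / (2c+1)^3], and [c + 1 <= 2c + 1]. *)
Lemma weighted_kern_pos_col_le (c : nat) :
  sum_n (fun a => weighted_kern_pos m a c) c <= 4 * / oddR c ^ 2.
Proof.
  pose proof (oddR_pos c) as Hc.
  apply Rle_trans with (sum_n (fun _ => 4 / oddR c ^ 3) c).
  - apply sum_n_m_le. intro a. unfold weighted_kern_pos, weighted_kern, kern_odd.
    destruct (Nat.ltb_spec a c) as [Hac|_].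
    + destruct (Nat.eqb_spec c a) as [->|_]; [lia|].
      apply inv_pow_mul_kern_le; [apply oddR_ge_1|now apply oddR_add_2_le|lia].
    + assert (0 < oddR c ^ 3) by (apply pow_lt; lra).
      unfold Rdiv. assert (0 < / oddR c ^ 3) by (apply Rinv_0_lt_compat; lra). lra.
  - unfold sum_n. rewrite sum_n_m_const, Nat.sub_0_r, S_INR.
    assert (Hc1 : INR c + 1 <= oddR c) by (rewrite oddR_eq; pose proof (pos_INR c); lra).
    replace (4 / oddR c ^ 3) with (4 * / oddR c ^ 2 * / oddR c) by (simpl; field; lra).
    assert (0 < / oddR c ^ 2) by (apply Rinv_0_lt_compat, pow_lt; lra).
    assert ((INR c + 1) * / oddR c <= 1).
    { apply (Rmult_le_reg_r (oddR c)); [lra|]. rewrite Rmult_assoc, Rinv_l; lra. }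
    nra.
Qed.

Lemma ex_series_weighted_kern_pos :
  ex_series (fun c => sum_n (fun a => weighted_kern_pos m a c) c).
Proof.
  apply (@ex_series_le R_AbsRing R_CompleteNormedModule _ (fun c => 4 * / oddR c ^ 2)).
  - intro c. change (norm ?x) with (Rabs x). rewrite Rabs_pos_eq.
    + apply weighted_kern_pos_col_le.
    + apply Rle_trans with (sum_n (fun _ => 0) c).
      * unfold sum_n. rewrite sum_n_m_const. lra.
      * apply sum_n_m_le. intro a. apply weighted_kern_pos_nonneg.
  - exists (4 * dlambda 2). apply is_series_Rmult_l, is_series_dlambda. lia.
Qed.

Lemma ex_series_harmonic_odd_pow : ex_series (fun n => harmonic n / oddR n ^ (2 * m + 1)).
Proof.
  apply (@ex_series_le R_AbsRing R_CompleteNormedModule _ (fun n => / oddR n ^ (2 * m))).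
  - intro n. change (norm ?x) with (Rabs x).
    pose proof (oddR_pos n). pose proof (harmonic_nonneg n).
    assert (Hle : harmonic n <= oddR n).
    { pose proof (harmonic_le n). rewrite oddR_eq. pose proof (pos_INR n). lra. }
    assert (0 < / oddR n ^ (2 * m)) by (apply Rinv_0_lt_compat, pow_lt; lra).
    replace (harmonic n / oddR n ^ (2 * m + 1)) with (harmonic n / oddR n * / oddR n ^ (2 * m))
      by (rewrite Nat.add_1_r; simpl; field; split; [apply pow_nonzero|]; lra).
    assert (0 <= harmonic n / oddR n <= 1).
    { split; [apply Rdiv_le_0_compat; lra|]. apply (Rmult_le_reg_r (oddR n)); [lra|].
      unfold Rdiv. rewrite Rmult_assoc, Rinv_l; lra. }
    rewrite Rabs_pos_eq; nra.
  - apply ex_series_inv_oddR_pow. lia.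
Qed.

Lemma is_series_weighted_kern_odd_total :
  is_series (fun c => / oddR c ^ (2 * m + 1) * kern_odd_total c)
    (-2 * ln 2 * dlambda (2 * m + 1) - Series (fun n => harmonic n / oddR n ^ (2 * m + 1))
     + 3 / 2 * dlambda (2 * m + 2)).
Proof.
  apply (is_series_Rext (fun c => -2 * ln 2 * / oddR c ^ (2 * m + 1)
                                  - harmonic c / oddR c ^ (2 * m + 1)
                                  + 3 / 2 * / oddR c ^ (2 * m + 2))).
  - intro c. unfold kern_odd_total. replace (2 * m + 2)%nat with (S (2 * m + 1)) by lia.
    pose proof (oddR_pos c). assert (0 < oddR c ^ (2 * m + 1)) by (apply pow_lt; lra).
    rewrite <- tech_pow_Rmult. field. lra.
  - apply is_series_Rplus; [apply is_series_Rminus|].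
    + apply is_series_Rmult_l, is_series_dlambda. lia.
    + apply Series_correct, ex_series_harmonic_odd_pow.
    + apply is_series_Rmult_l, is_series_dlambda. lia.
Qed.

Lemma is_series_weighted_kern_col (c : nat) :
  is_series (fun a => weighted_kern m a c)
    (2 * sum_n_m (fun q => dlambda (2 * q + 1) * / oddR c ^ (2 * m + 1 - 2 * q)) 1 (m - 1)
     - / oddR c ^ (2 * m + 1) * kern_odd_total c
     - 2 * (INR (m - 1) * / oddR c ^ (2 * m + 2))).
Proof.
  apply (is_series_Rext _ _ _ (fun a => eq_sym (weighted_kern_decomp a c))).
  rewrite <- mixed_term_diag.
  apply is_series_Rminus; [apply is_series_Rminus|].
  - apply is_series_Rmult_l, is_series_mixed_term.
  - apply is_series_Rmult_l, is_series_kern_odd.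
  - apply is_series_indicator.
Qed.

Theorem is_series_harmonic_odd_pow :
  is_series (fun n => harmonic n / oddR n ^ (2 * m + 1))
    (-2 * dlambda (2 * m + 1) * ln 2 + (INR m + / 2) * dlambda (2 * m + 2) - lambda_pair_sum m).
Proof.
  pose proof is_series_weighted_kern_odd_total as Htotal.
  set (SH := Series (fun n => harmonic n / oddR n ^ (2 * m + 1))) in Htotal.
  set (LG := -2 * ln 2 * dlambda (2 * m + 1) - SH + 3 / 2 * dlambda (2 * m + 2)) in Htotal.
  assert (Hrows : is_series (fun a => / oddR a ^ (2 * m + 1) * kern_odd_total a)
                    (2 * lambda_pair_sum m - LG - 2 * (INR (m - 1) * dlambda (2 * m + 2)))).
  { apply (is_series_swap_dominated (weighted_kern m) (weighted_kern_pos m)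
             (fun c => sum_n (fun a => weighted_kern_pos m a c) c) _ _ _
             weighted_kern_pos_nonneg weighted_kern_le_pos is_series_weighted_kern_pos
             ex_series_weighted_kern_pos is_series_weighted_kern_col).
    - apply is_series_Rminus; [apply is_series_Rminus|].
      + apply is_series_Rmult_l, is_series_mixed_term_total.
      + exact Htotal.
      + apply is_series_Rmult_l, is_series_Rmult_l, is_series_dlambda. lia.
    - intro a. apply is_series_Rmult_l, is_series_kern_odd. }
  assert (HLG : LG = 2 * lambda_pair_sum m - LG - 2 * (INR (m - 1) * dlambda (2 * m + 2))).
  { rewrite <- (is_series_unique _ _ Hrows). symmetry. exact (is_series_unique _ _ Htotal). }
  enough (Hval : SH = -2 * dlambda (2 * m + 1) * ln 2 + (INR m + / 2) * dlambda (2 * m + 2)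
                      - lambda_pair_sum m)
    by (rewrite <- Hval; apply Series_correct, ex_series_harmonic_odd_pow).
  rewrite minus_INR, INR_1 in HLG by exact hm. unfold LG in HLG. lra.
Qed.

End OddExponent.

Lemma lambda_pair_sum_odd (b : nat) : (1 <= b)%nat ->
  lambda_pair_sum (2 * b - 1)
  = 2 * sum_n_m (fun q => dlambda (2 * q + 1) * dlambda (4 * b - 2 * q - 1)) 1 (b - 1).
Proof.
  intros hb. unfold lambda_pair_sum.
  replace (2 * b - 1 - 1)%nat with (2 * (b - 1))%nat by lia.
  rewrite (sum_n_m_Rext _ (fun q => dlambda (2 * q + 1) * dlambda (4 * b - 2 * q - 1)))
    by (intros q Hq; f_equal; f_equal; lia).
  apply sum_n_m_symmetric. intros q Hq. rewrite Rmult_comm. f_equal; f_equal; lia.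
Qed.

Theorem mainTheorem4 (b : nat) (hb : (1 <= b)%nat) :
  is_series (fun n : nat => harmonic n / (INR (2 * n + 1)) ^ (4 * b - 1))
    (- 2 * dlambda (4 * b - 1) * ln 2
     + (2 * INR b - 1 / 2) * dlambda (4 * b)
     - 2 * sum_n_m (fun q : nat => dlambda (2 * q + 1) * dlambda (4 * b - 2 * q - 1)) 1 (b - 1)).
Proof.
  pose proof (is_series_harmonic_odd_pow (2 * b - 1) ltac:(lia)) as H.
  replace (2 * (2 * b - 1) + 1)%nat with (4 * b - 1)%nat in H by lia.
  replace (2 * (2 * b - 1) + 2)%nat with (4 * b)%nat in H by lia.
  rewrite lambda_pair_sum_odd in H by exact hb.
  replace (INR (2 * b - 1) + / 2) with (2 * INR b - 1 / 2) in H.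
  - exact H.
  - rewrite minus_INR, mult_INR by lia. simpl. field.
Qed.
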